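(* Let $(\Lambda,d)$ be a finitely aligned $k$-graph. The family of sets $\{D_F,\ X_\Lambda\setminus D_F : F\in S_\Lambda\}$ is a subbasis for a Hausdorff topology on $X_\Lambda$.
   Context: A $k$-graph $(\Lambda,d)$ is a countable small category $\Lambda$ (objects identified with identity morphisms) with a functor $d:\Lambda\to\mathbb N^k$ satisfying unique factorization: whenever $d(\lambda)=m+n$ there are unique $\mu,\nu$ with $d(\mu)=m$, $d(\nu)=n$, $\lambda=\mu\nu$. $\Lambda^0=d^{-1}(0)$, $r,s$ range/source. $\Lambda^{\min}(\lambda,\mu)=\{(\alpha,\beta):\lambda\alpha=\mu\beta,\ d(\lambda\alpha)=d(\lambda)\vee d(\mu)\}$; finitely aligned means all are finite. $S_\Lambda$ is the set of finite $F\subseteq\{(\lambda,\mu)\in\Lambda\times\Lambda:s(\lambda)=s(\mu)\}$ such that distinct $(\lambda,\mu),(\nu,\omega)\in F$ satisfy $\Lambda^{\min}(\lambda,\nu)=\Lambda^{\min}(\mu,\omega)=\emptyset$. For $m\in(\mathbb N\cup\{\infty\})^k$, $\Omega_{k,m}$ is the $k$-graph with objects $\{p\in\mathbb N^k:p\le m\}$, morphisms $(p,q)$ with $p\le q\le m$, $r(p,q)=p$, $s(p,q)=q$, $d(p,q)=q-p$. $X_\Lambda$ is the set of all functors $x:\Omega_{k,m}\to\Lambda$ (any $m$) with $d(x(p,q))=q-p$; $d(x)=m$, $r(x)=x(0,0)$. For $F\in S_\Lambda$, $D_F=\{x\in X_\Lambda:\text{there is }(\lambda,\mu)\in F\text{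 with }d(\mu)\le d(x),\ x(0,d(\mu))=\mu\}$. *)

From Stdlib Require List.
From mathcomp Require Import all_boot.
Set Implicit Arguments.
Unset Strict Implicit.
Unset Printing Implicit Defensive.

Definition vec (k : nat) := 'I_k -> nat.
Definition vzero {k} : vec k := fun _ => 0.
Definition vadd {k} (p q : vec k) : vec k := fun i => p i + q i.
Definition vsub {k} (q p : vec k) : vec k := fun i => q i - p i.
Definition vjoin {k} (p q : vec k) : vec k := fun i => maxn (p i) (q i).
Definition vle {k} (p q : vec k) : Prop := forall i, p i <= q i.

(* extended degrees: None stands for infinity *)
Definition evec (k : nat) := 'I_k -> option nat.
Definition vle_e {k} (p : vec k) (m : evec k) : Prop :=
  forall i, match m i with Some n => p i <= n | None => true end.

(* k-graphs.  Composition is a total function, only meaningful (and   *)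
(* only constrained) on composable pairs (src f = rng g).  Objects are *)
(* a separate type identified with identity morphisms via [idm].       *)
Record kgraph (k : nat) := KGraph {
  Obj : Type;
  Mor : Type;
  idm : Obj -> Mor;
  rng : Mor -> Obj;
  src : Mor -> Obj;
  comp : Mor -> Mor -> Mor;       (* comp f g = f g : first g then f *)
  deg : Mor -> vec k;
  obj_countable : exists c : Obj -> nat, injective c;
  mor_countable : exists c : Mor -> nat, injective c;
  rng_idm : forall a, rng (idm a) = a;
  src_idm : forall a, src (idm a) = a;
  comp_idl : forall f, comp (idm (rng f)) f = f;
  comp_idr : forall f, comp f (idm (src f)) = f;
  rng_comp : forall f g, src f = rng g -> rng (comp f g) = rng f;
  src_comp : forall f g, src f = rng g -> src (comp f g) = src g;
  comp_assoc : forall f g h, src f = rng g -> src g = rng h ->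
     comp f (comp g h) = comp (comp f g) h;
  deg_idm : forall a, deg (idm a) = vzero;
  deg_comp : forall f g, src f = rng g -> deg (comp f g) = vadd (deg f) (deg g);
  unique_fact : forall l (m n : vec k), deg l = vadd m n ->
     exists mu nu, [/\ deg mu = m, deg nu = n, src mu = rng nu & l = comp mu nu]
     /\ forall mu' nu', deg mu' = m -> deg nu' = n -> src mu' = rng nu' ->
          l = comp mu' nu' -> mu' = mu /\ nu' = nu
}.

Arguments idm {k} _ _.
Arguments rng {k} _ _.
Arguments src {k} _ _.
Arguments comp {k} _ _ _.
Arguments deg {k} _ _.

Definition finite_pred {T : Type} (A : T -> Prop) : Prop :=
  exists s : seq T, forall x, A x -> List.In x s.

Definition Lmin {k} (L : kgraph k) (l mu : Mor L) : Mor L * Mor L -> Prop :=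
  fun ab => let: (a, b) := ab in
    [/\ src L l = rng L a, src L mu = rng L b,
        comp L l a = comp L mu b
      & deg L (comp L l a) = vjoin (deg L l) (deg L mu)].

Arguments Lmin {k} L l mu _.

Definition finitely_aligned {k} (L : kgraph k) : Prop :=
  forall l mu : Mor L, finite_pred (Lmin L l mu).

Definition S_Lambda {k} (L : kgraph k) (F : Mor L * Mor L -> Prop) : Prop :=
  [/\ finite_pred F,
      (forall lm, F lm -> src L lm.1 = src L lm.2)
    & (forall lm nw, F lm -> F nw -> lm <> nw ->
         (forall ab, ~ Lmin L lm.1 nw.1 ab) /\ (forall ab, ~ Lmin L lm.2 nw.2 ab))].

Arguments S_Lambda {k} L F.

(* X_Lambda: degree-preserving functors Omega_{k,m} -> Lambda.         *)
(* A functor is recorded through its action on morphisms (p,q) of     *)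
(* Omega_{k,m}; [xmap p q] is [Some (x(p,q))] if p <= q <= m and None  *)
(* otherwise (so that equal functors have equal representations).     *)
(* The object map is p |-> x(p,p).                                     *)
Record kpath {k} (L : kgraph k) := KPath {
  xdeg : evec k;
  xmap : vec k -> vec k -> option (Mor L);
  xmap_out : forall p q, ~ (vle p q /\ vle_e q xdeg) -> xmap p q = None;
  xmap_in : forall p q, vle p q -> vle_e q xdeg ->
     exists l, xmap p q = Some l /\ deg L l = vsub q p;
  xmap_id : forall p l, xmap p p = Some l -> l = idm L (rng L l);
  xmap_comp : forall p q r l1 l2, xmap p q = Some l1 -> xmap q r = Some l2 ->
     src L l1 = rng L l2 /\ xmap p r = Some (comp L l1 l2)
}.

Arguments xdeg {k L} _ _ : rename.
Arguments xdeg {k L} _ : rename.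

Definition D_F {k} (L : kgraph k) (F : Mor L * Mor L -> Prop) : kpath L -> Prop :=
  fun x => exists lm, F lm /\ vle_e (deg L lm.2) (xdeg x)
                      /\ xmap x vzero (deg L lm.2) = Some lm.2.

Arguments D_F {k} L F _.

(* U is open in the topology generated by the family B: every point of U
   lies in a finite intersection of members of B contained in U
   (the empty intersection being the whole space). *)
Definition gen_open {T : Type} (B : (T -> Prop) -> Prop) (U : T -> Prop) : Prop :=
  forall x, U x -> exists s : seq (T -> Prop),
    (forall V, List.In V s -> B V) /\ (forall V, List.In V s -> V x) /\
    (forall y, (forall V, List.In V s -> V y) -> U y).

Definition hausdorff_gen {T : Type} (B : (T -> Prop) -> Prop) : Prop :=
  forall x y : T, x <> y -> exists U V,
    [/\ gen_open B U, gen_open B V, U x, V y & forall z, U z -> V z -> False].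

Definition DF_family {k} (L : kgraph k) : (kpath L -> Prop) -> Prop :=
  fun U => exists F, S_Lambda L F /\
    (U = D_F L F \/ U = (fun x => ~ D_F L F x)).

Arguments DF_family {k} L _.

From Pilot Require Import Defs.
From mathcomp Require Import all_boot.
From Stdlib Require Import Classical FunctionalExtensionality ProofIrrelevance.

(* A path x is determined by its initial segments x(0,n): unique factorisation
   recovers x(p,q) from x(0,q) = x(0,p) x(p,q), and the degree of x is read off
   from the set of n for which x(0,n) is defined.  Hence two distinct paths
   differ at some initial segment mu, and the cylinder D_F for F = {(mu, mu)}
   and its complement separate them. *)

Set Implicit Arguments.
Unset Strict Implicit.

Section SubbasisSeparation.
Variables (T : Type) (B : (T -> Prop) -> Prop).

Definition separated (x y : T) := exists U V,
  [/\ gen_open B U, gen_open B V, U x, V y & forall z, U z -> V z -> False].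

Lemma separated_sym x y : separated x y -> separated y x.
Proof. by move=> [U [V [oU oV Ux Vy dUV]]]; exists V, U; split=> // z /dUV. Qed.

Lemma subbasic_open U : B U -> gen_open B U.
Proof.
move=> BU x Ux; exists [:: U]; split; [|split].
- by move=> V [<-|[]].
- by move=> V [<-|[]].
- by move=> y /(_ U (or_introl erefl)).
Qed.

Lemma separated_subbasic U x y :
  B U -> B (fun z => ~ U z) -> U x -> ~ U y -> separated x y.
Proof.
move=> BU BnU Ux nUy; exists U, (fun z => ~ U z).
by split=> //; apply: subbasic_open.
Qed.

End SubbasisSeparation.

Section Vectors.
Variable k : nat.

Lemma vsub0 (n : vec k) : vsub n vzero = n.
Proof. by apply: functional_extensionality => i; rewrite /vsub subn0. Qed.

Lemma vle0 (n : vec k) : vle vzero n.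
Proof. by []. Qed.

Lemma vle_e_trans (p q : vec k) (d : evec k) : vle p q -> vle_e q d -> vle_e p d.
Proof.
move=> hpq hq i; move: (hq i) (hpq i); case: (d i) => // a.
by move=> /[swap]; apply: leq_trans.
Qed.

Definition vunit (i : 'I_k) (c : nat) : vec k := fun j => if j == i then c else 0.

Lemma vle_e_unit i c (d : evec k) :
  vle_e (vunit i c) d <-> is_true (if d i is Some m then c <= m else true).
Proof.
split=> [/(_ i) | h j]; first by rewrite /vunit eqxx.
by rewrite /vunit; case: eqP => [->|_] //; case: (d j).
Qed.

Lemma evec_ext (d1 d2 : evec k) :
  (forall n, vle_e n d1 <-> vle_e n d2) -> d1 = d2.
Proof.
move=> h; apply: functional_extensionality => i.
have hu c : (if d1 i is Some m then c <= m else true)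
            = (if d2 i is Some m then c <= m else true).
  by apply/idP/idP => hc; apply/vle_e_unit/h/vle_e_unit.
case E1: (d1 i) (hu) => [a|]; case E2: (d2 i) => [b|] // {}hu.
- by apply/f_equal/eqP; rewrite eqn_leq -hu leqnn hu leqnn.
- by move: (hu a.+1); rewrite ltnn.
- by move: (hu b.+1); rewrite ltnn.
Qed.

End Vectors.

Section KGraphs.
Variables (k : nat) (L : kgraph k).

Lemma comp_cancell (a l1 l2 : Mor L) :
  src L a = rng L l1 -> src L a = rng L l2 -> deg L l1 = deg L l2 ->
  Defs.comp L a l1 = Defs.comp L a l2 -> l1 = l2.
Proof.
move=> s1 s2 d12 e.
have [? [? [_ factor_uniq]]] := unique_fact (deg_comp s1).
have [_ ->] := factor_uniq a l1 erefl erefl s1 erefl.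
by have [_ ->] := factor_uniq a l2 erefl (esym d12) s2 e.
Qed.

Lemma xmap_Some (x : kpath L) p q l : xmap x p q = Some l ->
  [/\ vle p q, vle_e q (xdeg x) & deg L l = vsub q p].
Proof.
move=> hx; case: (classic (vle p q /\ vle_e q (xdeg x))) => [[hpq hq]|out].
  by have [l' [hx' dl']] := xmap_in hpq hq; move: hx; rewrite hx' => -[<-].
by move: hx; rewrite xmap_out.
Qed.

Lemma xmap0_defined (x : kpath L) n : xmap x vzero n <> None <-> vle_e n (xdeg x).
Proof.
split=> [hx | hn]; last by have [l [-> _]] := xmap_in (vle0 n) hn.
by apply: NNPP => hn; apply/hx/xmap_out => -[].
Qed.

Lemma kpath_ext (x y : kpath L) :
  xdeg x = xdeg y -> (forall p q, xmap x p q = xmap y p q) -> x = y.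
Proof.
case: x => d1 m1 ? ? ? ?; case: y => d2 m2 ? ? ? ? /= Ed Em.
have Em' : m1 = m2.
  by do 2![apply: functional_extensionality => ?]; apply: Em.
by subst; f_equal; apply: proof_irrelevance.
Qed.

Section SameInitialSegments.
Variables x y : kpath L.
Hypothesis xy0 : forall n, xmap x vzero n = xmap y vzero n.

Lemma xdeg_initial : xdeg x = xdeg y.
Proof.
apply: evec_ext => n.
by split=> /xmap0_defined h; apply/xmap0_defined; [rewrite -xy0 | rewrite xy0].
Qed.

Lemma xmap_initial p q l : xmap x p q = Some l -> xmap y p q = Some l.
Proof.
move=> hx; have [hpq hq dl] := xmap_Some hx.
have [a [ha _]] := xmap_in (vle0 p) (vle_e_trans hpq hq).
have [sa hxq] := xmap_comp ha hx.
rewrite xdeg_initial in hq.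
have [l' [hy dl']] := xmap_in hpq hq.
rewrite xy0 in ha; rewrite xy0 in hxq.
have [sa' hyq] := xmap_comp ha hy.
move: hxq; rewrite hyq hy => -[e].
by congr Some; apply: (comp_cancell sa' sa); rewrite ?dl ?dl'.
Qed.

End SameInitialSegments.

Lemma kpath_initial_ext (x y : kpath L) :
  (forall n, xmap x vzero n = xmap y vzero n) -> x = y.
Proof.
move=> xy0; apply: kpath_ext; first exact: xdeg_initial.
move=> p q; case hx: (xmap x p q) => [l|]; first by rewrite (xmap_initial xy0 hx).
case hy: (xmap y p q) => [l|] //.
by rewrite (xmap_initial (fun n => esym (xy0 n)) hy) in hx.
Qed.

Definition diag1 (mu : Mor L) (lm : Mor L * Mor L) : Prop := lm = (mu, mu).

Lemma S_Lambda_diag1 mu : S_Lambda L (diag1 mu).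
Proof.
split.
- by exists [:: (mu, mu)] => lm ->; left.
- by move=> lm ->.
- by move=> lm nw -> -> [].
Qed.

Lemma D_F_diag1 mu (x : kpath L) :
  D_F L (diag1 mu) x <-> xmap x vzero (deg L mu) = Some mu.
Proof.
split; first by move=> [_ [-> [_ ?]]].
move=> hx; exists (mu, mu); split=> //.
by have [_ ? _] := xmap_Some hx.
Qed.

Lemma separated_initial (x y : kpath L) n mu :
  xmap x vzero n = Some mu -> xmap y vzero n <> Some mu ->
  separated (DF_family L) x y.
Proof.
move=> hx hy; have [_ _] := xmap_Some hx; rewrite vsub0 => dmu.
apply: (@separated_subbasic _ _ (D_F L (diag1 mu))).
- by exists (diag1 mu); split; [apply: S_Lambda_diag1 | left].
- by exists (diag1 mu); split; [apply: S_Lambda_diag1 | right].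
- by apply/D_F_diag1; rewrite dmu.
- by move/D_F_diag1; rewrite dmu.
Qed.

End KGraphs.

Theorem proposition5p4 (k : nat) (L : kgraph k) :
  finitely_aligned L -> hausdorff_gen (DF_family L).
Proof.
move=> _ x y nxy; suff : separated (DF_family L) x y by [].
have [n hn] : exists n, xmap x vzero n <> xmap y vzero n.
  apply: NNPP => hall; apply: nxy; apply: kpath_initial_ext => n.
  by apply: NNPP => hn; apply: hall; exists n.
case hx: (xmap x vzero n) hn => [mu|] hn.
  by apply: (separated_initial hx) => /esym /hn.
case hy: (xmap y vzero n) hn => [nu|] // _.
by apply/separated_sym/(separated_initial hy); rewrite hx.
Qed.
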